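(* Let $G=A*_C B$ with $|A/C|\ge2$, $|B/C|\ge2$ and generating set $S=(A\cup B)\setminus\{1\}$. Let $w$ be a nonempty word such that $w^2$ is reduced. Then for every $g\in G$ there is a geodesic word $u$ with $\bar u=g$ that realizes $c_w$ at $g$, i.e. $|u|-|u|_w=\min\{|v|-|v|_w : \bar v=g\}$.
   Context: Words are finite sequences of letters in $S$; $\bar u$ is the element represented, $|u|$ the length, $|g|$ the word length of $g$; a geodesic word is one with $|u|=|\bar u|$. A word $x_1\cdots x_n$ is reduced if $n=1$ or its letters alternately lie in $A\setminus C$ and $B\setminus C$. For a nonempty word $w$ and a word $u$, $|u|_w$ is the maximal number of pairwise non-overlapping occurrences of $w$ as a contiguous subword of $u$, and $c_w(g)=|g|-\min\{|v|-|v|_w:\bar v=g\}$. *)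

From Stdlib Require Import List Arith.
Import ListNotations.
Set Implicit Arguments.
Unset Strict Implicit.

Record Group := {
  carrier :> Type;
  gmul : carrier -> carrier -> carrier;
  gone : carrier;
  ginv : carrier -> carrier;
  gmulA : forall x y z, gmul x (gmul y z) = gmul (gmul x y) z;
  gmul1l : forall x, gmul gone x = x;
  gmulVl : forall x, gmul (ginv x) x = gone }.

Section Defs.
Variable G : Group.

Definition is_subgroup (H : G -> Prop) : Prop :=
  H (@gone G) /\ (forall x y, H x -> H y -> H (@gmul G x y)) /\
  (forall x, H x -> H (@ginv G x)).

Fixpoint eval (u : list G) : G :=
  match u with [] => @gone G | x :: u' => @gmul G x (eval u') end.

Definition is_word (S : G -> Prop) (u : list G) : Prop := Forall S u.

Definition geodesic (S : G -> Prop) (u : list G) : Prop :=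
  is_word S u /\ forall v, is_word S v -> eval v = eval u -> length u <= length v.

Fixpoint alternating (P R Q : G -> Prop) (u : list G) : Prop :=
  match u with
  | [] => True
  | [x] => (P x /\ ~ Q x) \/ (R x /\ ~ Q x)
  | x :: ((y :: _) as u') =>
      (((P x /\ ~ Q x) /\ (R y /\ ~ Q y)) \/ ((R x /\ ~ Q x) /\ (P y /\ ~ Q y)))
      /\ alternating P R Q u'
  end.

Definition reduced (A B C : G -> Prop) (u : list G) : Prop :=
  length u = 1 \/ alternating A B C u.

Inductive occ (w : list G) : nat -> list G -> Prop :=
  | occ0 : forall u, occ w 0 u
  | occS : forall k p u, occ w k u -> occ w (S k) (p ++ w ++ u).

Definition occ_count (w u : list G) (k : nat) : Prop :=
  occ w k u /\ forall k', occ w k' u -> k' <= k.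

(* G is the (internal) amalgamated free product A *_C B, with C = A ∩ B:
   A, B subgroups, A ∪ B generates G, and (reduced form theorem) every
   nonempty product alternating between A\C and B\C is nontrivial. *)
Definition is_amalgam (A B C : G -> Prop) : Prop :=
  is_subgroup A /\ is_subgroup B /\ (forall x, C x <-> (A x /\ B x)) /\
  (forall g, exists u, Forall (fun x => A x \/ B x) u /\ eval u = g) /\
  (forall u, u <> [] -> alternating A B C u -> eval u <> @gone G).

End Defs.

(* Call a word over S separated if no two adjacent letters lie in a common
   factor.  By the normal form theorem for A *_C B, two separated words
   representing the same element have the same length, so separated words are
   geodesic.  Merging two adjacent letters of a common factor into one (or none)
   shortens a word, and since w^2 is reduced such a pair meets at most one of a
   family of disjoint occurrences of w: merging never increases |v| - |v|_w.
   Merging repeatedly in a word minimising |v| - |v|_w thus gives a separated,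
   hence geodesic, word realising c_w(g). *)

From Stdlib Require Import List Arith Lia Classical.
Import ListNotations.

Section GroupFacts.
Context {G : Group}.
Local Notation "x ** y" := (@gmul G x y) (at level 40, left associativity).
Local Notation one := (@gone G).
Local Notation inv := (@ginv G).

Lemma gmulVr (x : G) : x ** inv x = one.
Proof.
  rewrite <- (gmul1l (x ** inv x)), <- (gmulVl (inv x)) at 1.
  rewrite <- gmulA, (gmulA (inv x) x), gmulVl, gmul1l.
  apply gmulVl.
Qed.

Lemma gmul1r (x : G) : x ** one = x.
Proof. rewrite <- (gmulVl x), gmulA, gmulVr. apply gmul1l. Qed.

Lemma ginvK (x : G) : inv (inv x) = x.
Proof.
  rewrite <- (gmul1r (inv (inv x))), <- (gmulVl x), gmulA, gmulVl.
  apply gmul1l.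
Qed.

Lemma eval_app (u v : list G) : eval (u ++ v) = eval u ** eval v.
Proof. induction u as [|x u IH]; simpl; [now rewrite gmul1l | now rewrite IH, gmulA]. Qed.

Definition inv_word (u : list G) : list G := rev (map inv u).

Lemma inv_word_cons x u : inv_word (x :: u) = inv_word u ++ [inv x].
Proof. reflexivity. Qed.

Lemma eval_inv_wordK u : eval (inv_word u) ** eval u = one.
Proof.
  induction u as [|x u IH]; simpl; [apply gmul1l|].
  rewrite inv_word_cons, eval_app; simpl.
  rewrite gmul1r, <- gmulA, (gmulA (inv x)), gmulVl, gmul1l.
  exact IH.
Qed.

Section Subgroup.
Context {H : G -> Prop} (H_sub : is_subgroup H).

Lemma subgroup_inv x : H (inv x) <-> H x.
Proof.
  destruct H_sub as [_ [_ Hinv]].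
  split; intro Hx; [rewrite <- ginvK|]; auto.
Qed.

Lemma subgroup_mull {h} x : H h -> H (h ** x) <-> H x.
Proof.
  destruct H_sub as [_ [Hmul Hinv]]; intro Hh; split; intro Hx; auto.
  replace x with (inv h ** (h ** x)) by now rewrite gmulA, gmulVl, gmul1l.
  auto.
Qed.

Lemma subgroup_mulr {h} x : H h -> H (x ** h) <-> H x.
Proof.
  destruct H_sub as [_ [Hmul Hinv]]; intro Hh; split; intro Hx; auto.
  replace x with ((x ** h) ** inv h) by now rewrite <- gmulA, gmulVr, gmul1r.
  auto.
Qed.

End Subgroup.
End GroupFacts.

Lemma nat_min_exists (P : nat -> Prop) :
  (exists n, P n) -> exists m, P m /\ forall n, P n -> m <= n.
Proof.
  intro Hex.
  destruct (dec_inh_nat_subset_has_unique_least_element P (fun n => classic (P n)) Hex)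
    as [m [Hm _]].
  exists m; exact Hm.
Qed.

Lemma nat_max_exists (P : nat -> Prop) N :
  (exists n, P n) -> (forall n, P n -> n <= N) -> exists m, P m /\ forall n, P n -> n <= m.
Proof.
  intros [n Hn] Hbound.
  destruct (nat_min_exists (fun j => P (N - j))) as [j [Hj Hmin]].
  { exists (N - n). replace (N - (N - n)) with n by (specialize (Hbound n Hn); lia). exact Hn. }
  exists (N - j); split; [exact Hj|].
  intros k Hk. specialize (Hbound k Hk).
  assert (j <= N - k) by (apply Hmin; now replace (N - (N - k)) with k by lia).
  lia.
Qed.

Section Occurrences.
Context {G : Group} {w : list G} (w_ne : w <> []).

Lemma occ_app_l k p u : occ w k u -> occ w k (p ++ u).
Proof.
  destruct 1 as [|k q u Hu]; [constructor|].
  rewrite app_assoc. now constructor.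
Qed.

Lemma occ_pred {k u} : occ w (S k) u -> occ w k u.
Proof. intro H; inversion H; subst. rewrite app_assoc. now apply occ_app_l. Qed.

Lemma occ_le j k u : occ w k u -> j <= k -> occ w j u.
Proof.
  intros Hk Hjk; revert Hk; induction Hjk as [|m _ IH]; [easy|].
  intro Hm; exact (IH (occ_pred Hm)).
Qed.

Lemma occ_length {k u} : occ w k u -> k <= length u.
Proof.
  induction 1; [lia|].
  rewrite !length_app. destruct w; [congruence|]. simpl. lia.
Qed.

Lemma occ_cons_inv {k y u} : occ w k (y :: u) -> (forall s, w <> y :: s) -> occ w k u.
Proof.
  intros Hk Hy; remember (y :: u) as v eqn:E.
  destruct Hk as [|k p v Hv]; [constructor|].
  destruct p as [|y' p]; simpl in E.
  - destruct w as [|a s]; [easy|].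
    injection E as -> _. now destruct (Hy s).
  - injection E as _ <-. now constructor.
Qed.

Lemma occ_count_exists u : exists k, occ_count w u k.
Proof.
  destruct (nat_max_exists (fun k => occ w k u) (length u)) as [k Hk].
  - exists 0; constructor.
  - intros n; now apply occ_length.
  - now exists k.
Qed.

End Occurrences.

Section ReducedForm.
Context {G : Group} (A B C : G -> Prop).
Local Notation "x ** y" := (@gmul G x y) (at level 40, left associativity).
Local Notation one := (@gone G).
Local Notation inv := (@ginv G).

Hypothesis A_sub : is_subgroup A.
Hypothesis B_sub : is_subgroup B.
Hypothesis C_AB : forall x, C x <-> A x /\ B x.

Definition same_factor (x y : G) : Prop := (A x /\ A y) \/ (B x /\ B y).
Definition syllable (x : G) : Prop := (A x \/ B x) /\ ~ C x.
Definition letter (x : G) : Prop := (A x \/ B x) /\ x <> one.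

Fixpoint separated (u : list G) : Prop :=
  match u with
  | x :: (y :: _) as u' => ~ same_factor x y /\ separated u'
  | _ => True
  end.

Definition alt_word (u : list G) : Prop := Forall syllable u /\ separated u.
Definition reduced_word (u : list G) : Prop := Forall letter u /\ separated u.

Ltac factor_tauto :=
  unfold syllable, letter, same_factor in *;
  repeat match goal with
  | _ : context [A ?t] |- _ =>
      lazymatch goal with _ : C t <-> _ |- _ => fail | _ => pose proof (C_AB t) end
  | |- context [A ?t] =>
      lazymatch goal with _ : C t <-> _ |- _ => fail | _ => pose proof (C_AB t) end
  end;
  tauto.

Lemma separated_tail {x u} : separated (x :: u) -> separated u.
Proof. destruct u; simpl; tauto. Qed.

Lemma separated_pair {u} : separated u ->
  forall l a b m, u = l ++ a :: b :: m -> ~ same_factor a b.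
Proof.
  intros Hu l; revert u Hu; induction l as [|x l IH]; intros u Hu a b m ->.
  - exact (proj1 Hu).
  - exact (IH _ (separated_tail Hu) a b m eq_refl).
Qed.

Lemma separated_of_no_pair u :
  (forall l a b m, u = l ++ a :: b :: m -> ~ same_factor a b) -> separated u.
Proof.
  induction u as [|x u IH]; intro Hno; [exact I|].
  destruct u as [|y u]; [exact I|]; split.
  - exact (Hno [] x y u eq_refl).
  - apply IH; intros l a b m E. apply (Hno (x :: l) a b m). now rewrite E.
Qed.

Lemma separated_join {l b m} :
  separated (l ++ [b]) -> separated (b :: m) -> separated (l ++ b :: m).
Proof.
  induction l as [|a l IH]; [easy|].
  destruct l as [|c l]; simpl; intros [Hab Hl] Hm.
  - now split.
  - split; [exact Hab | exact (IH Hl Hm)].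
Qed.

Lemma alternating_separated u : alternating A B C u -> separated u.
Proof.
  induction u as [|x u IH]; [easy|].
  destruct u as [|y u]; [easy|]; simpl; intros [Hxy Hu].
  split; [factor_tauto | exact (IH Hu)].
Qed.

Lemma alt_word_alternating u : alt_word u -> alternating A B C u.
Proof.
  induction u as [|x u IH]; [easy|]; intros [Hf Hs].
  apply Forall_cons_iff in Hf as [Hx Hf].
  destruct u as [|y u]; [simpl; factor_tauto|].
  apply Forall_cons_iff in Hf as [Hy Hf'].
  destruct Hs as [Hxy Hs]; split.
  - factor_tauto.
  - apply IH; split; [now constructor | exact Hs].
Qed.

Lemma syllable_inv x : syllable (inv x) <-> syllable x.
Proof. pose proof (subgroup_inv A_sub x); pose proof (subgroup_inv B_sub x); factor_tauto. Qed.

Lemma same_factor_invl x y : same_factor (inv x) y <-> same_factor x y.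
Proof. pose proof (subgroup_inv A_sub x); pose proof (subgroup_inv B_sub x); factor_tauto. Qed.

Lemma same_factor_invr x y : same_factor x (inv y) <-> same_factor x y.
Proof. pose proof (subgroup_inv A_sub y); pose proof (subgroup_inv B_sub y); factor_tauto. Qed.

Lemma syllable_mulCl c x : C c -> syllable x -> syllable (c ** x) /\ same_factor x (c ** x).
Proof.
  intros Hc; apply C_AB in Hc as [HcA HcB].
  pose proof (subgroup_mull A_sub x HcA); pose proof (subgroup_mull B_sub x HcB); factor_tauto.
Qed.

Lemma syllable_mulCr c x : C c -> syllable x -> syllable (x ** c) /\ same_factor x (x ** c).
Proof.
  intros Hc; apply C_AB in Hc as [HcA HcB].
  pose proof (subgroup_mulr A_sub x HcA); pose proof (subgroup_mulr B_sub x HcB); factor_tauto.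
Qed.

Lemma C_one : C one.
Proof. apply C_AB; split; [apply A_sub | apply B_sub]. Qed.

Lemma alt_word_tail {x u} : alt_word (x :: u) -> alt_word u.
Proof. intros [Hf Hs]; split; [now inversion Hf | exact (separated_tail Hs)]. Qed.

Lemma alt_word_cons a b m :
  syllable a -> ~ same_factor a b -> alt_word (b :: m) -> alt_word (a :: b :: m).
Proof. intros Ha Hab [Hf Hs]; split; [now constructor | now split]. Qed.

Lemma alt_word_join {l b m} :
  alt_word (l ++ [b]) -> alt_word (b :: m) -> alt_word (l ++ b :: m).
Proof.
  intros [Hf Hs] [Hf' Hs']; split; [|exact (separated_join Hs Hs')].
  apply Forall_app in Hf as [Hl _]; now apply Forall_app.
Qed.

Lemma alt_word_replace {l x m} y :
  alt_word (l ++ x :: m) -> syllable y -> same_factor x y -> alt_word (l ++ y :: m).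
Proof.
  intros [Hf Hs] Hy Hxy; split.
  { apply Forall_app in Hf as [Hl Hm]; apply Forall_app; split; [exact Hl|].
    constructor; [exact Hy | now inversion Hm]. }
  revert Hf Hs; induction l as [|a l IH]; intros Hf Hs.
  - destruct m as [|z m]; [exact I|]; split; [|exact (proj2 Hs)].
    apply Forall_cons_iff in Hf as [Hx Hf]; apply Forall_cons_iff in Hf as [Hz _].
    destruct Hs as [Hxz _]; factor_tauto.
  - apply Forall_cons_iff in Hf as [Ha Hf].
    specialize (IH Hf (separated_tail Hs)).
    destruct l as [|b l]; simpl in *; split; try tauto.
    apply Forall_cons_iff in Hf as [Hx _]; destruct Hs as [Hax _]; factor_tauto.
Qed.

Lemma alt_word_inv {p} : alt_word p -> alt_word (inv_word p).
Proof.
  induction p as [|y p IH]; intros Hp; [easy|]; rewrite inv_word_cons.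
  destruct p as [|z p]; simpl.
  - destruct Hp as [Hf _]; apply Forall_cons_iff in Hf as [Hy _].
    split; [constructor; [now apply syllable_inv | constructor] | exact I].
  - specialize (IH (alt_word_tail Hp)); rewrite inv_word_cons in IH.
    destruct Hp as [Hf [Hyz _]].
    apply Forall_cons_iff in Hf as [Hy Hf]; apply Forall_cons_iff in Hf as [Hz _].
    rewrite inv_word_cons, <- app_assoc; apply (alt_word_join IH), alt_word_cons.
    + now apply syllable_inv.
    + rewrite same_factor_invl, same_factor_invr; unfold same_factor in *; tauto.
    + split; [constructor; [now apply syllable_inv | constructor] | exact I].
Qed.

Hypothesis alternating_neq1 : forall u, u <> [] -> alternating A B C u -> eval u <> one.

Lemma alt_word_syllable {u x} : alt_word u -> In x u -> syllable x.
Proof. intros [Hf _]; now apply Forall_forall. Qed.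

Lemma alt_word_mulC_neq1 l m c :
  alt_word (l ++ m) -> l ++ m <> [] -> C c -> eval l ** (c ** eval m) <> one.
Proof.
  intros Hlm Hne Hc E.
  destruct m as [|x m].
  - rewrite app_nil_r in Hlm, Hne.
    destruct (exists_last Hne) as [l' [y ->]].
    assert (Hy : syllable y) by (apply (alt_word_syllable Hlm), in_elt).
    apply (alternating_neq1 (l' ++ [y ** c])); [now destruct l'| |].
    + apply alt_word_alternating, (alt_word_replace _ Hlm); now apply syllable_mulCr.
    + rewrite eval_app in *; simpl in *; rewrite !gmul1r in *.
      now rewrite gmulA.
  - assert (Hx : syllable x) by (apply (alt_word_syllable Hlm), in_elt).
    apply (alternating_neq1 (l ++ (c ** x) :: m)); [now destruct l| |].
    + apply alt_word_alternating, (alt_word_replace _ Hlm); now apply syllable_mulCl.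
    + rewrite eval_app; simpl. now rewrite <- gmulA.
Qed.

Lemma alt_word_step_split {y p x q c} :
  alt_word (y :: p) -> alt_word (x :: q) -> C c -> ~ same_factor y x ->
  eval (inv_word (y :: p)) ** (c ** eval (x :: q)) <> one.
Proof.
  intros Hp Hq Hc Hyx.
  assert (Hy : syllable y) by (apply (alt_word_syllable Hp); now left).
  apply alt_word_mulC_neq1; [|now destruct (inv_word (y :: p)) | exact Hc].
  rewrite inv_word_cons, <- app_assoc.
  apply alt_word_join; [rewrite <- inv_word_cons; now apply alt_word_inv|].
  apply alt_word_cons; [now apply syllable_inv | now rewrite same_factor_invl | exact Hq].
Qed.

Lemma alt_word_step_merge {y p x q c} :
  alt_word (y :: p) -> alt_word (x :: q) -> C c -> same_factor y x ->
  ~ C (inv y ** (c ** x)) -> eval (inv_word p) ** ((inv y ** (c ** x)) ** eval q) <> one.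
Proof.
  intros Hp Hq Hc Hyx Hz E.
  set (z := inv y ** (c ** x)) in *.
  assert (Hfac : same_factor (inv y) z /\ same_factor x z).
  { apply C_AB in Hc as [HcA HcB].
    pose proof (subgroup_inv A_sub y); pose proof (subgroup_inv B_sub y).
    destruct A_sub as [_ [HmA _]], B_sub as [_ [HmB _]].
    unfold z, same_factor in *; destruct Hyx as [[Hy Hx] | [Hy Hx]].
    - assert (A (inv y)) by tauto; split; left; split; repeat apply HmA; auto.
    - assert (B (inv y)) by tauto; split; right; split; repeat apply HmB; auto. }
  assert (Hsz : syllable z) by factor_tauto.
  apply (alt_word_mulC_neq1 (inv_word p) (z :: q) one); [| |exact C_one|].
  - apply alt_word_join.
    + apply (alt_word_replace (x := inv y)); [exact (alt_word_inv Hp) | exact Hsz | tauto].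
    + apply (alt_word_replace (l := []) (x := x)); [exact Hq | exact Hsz | tauto].
  - now destruct (inv_word p).
  - simpl; now rewrite gmul1l.
Qed.

(* Uniqueness of the syllable length in the normal form theorem: compare the
   first letters of [p] and [q] and absorb the [C]-element between them into [c]. *)
Lemma alt_word_length_eq p : forall q c, alt_word p -> alt_word q -> C c ->
  eval (inv_word p) ** (c ** eval q) = one -> length p = length q.
Proof.
  induction p as [|y p IH]; intros [|x q] c Hp Hq Hc E; [reflexivity | exfalso | exfalso |].
  - exact (alt_word_mulC_neq1 [] (x :: q) c Hq ltac:(discriminate) Hc E).
  - apply (alt_word_mulC_neq1 (inv_word (y :: p)) [] c); [| |exact Hc | exact E];
      rewrite app_nil_r; [now apply alt_word_inv | rewrite inv_word_cons; now destruct (inv_word p)].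
  - simpl; f_equal.
    destruct (classic (same_factor y x)) as [Hyx | Hyx];
      [|exfalso; exact (alt_word_step_split Hp Hq Hc Hyx E)].
    assert (Ez : eval (inv_word p) ** ((inv y ** (c ** x)) ** eval q) = one).
    { rewrite <- E, inv_word_cons, eval_app; simpl. now rewrite gmul1r, !gmulA. }
    destruct (classic (C (inv y ** (c ** x)))) as [Hz | Hz].
    + exact (IH q _ (alt_word_tail Hp) (alt_word_tail Hq) Hz Ez).
    + exfalso; exact (alt_word_step_merge Hp Hq Hc Hyx Hz Ez).
Qed.

Lemma separated_letters_syllables {x y m} :
  Forall letter (x :: y :: m) -> separated (x :: y :: m) -> Forall syllable (x :: y :: m).
Proof.
  revert x y; induction m as [|z m IH]; intros x y Hf [Hxy Hs];
    apply Forall_cons_iff in Hf as [Hx Hf]; pose proof (Forall_inv Hf) as Hy.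
  - constructor; [factor_tauto | constructor; [factor_tauto | constructor]].
  - constructor; [factor_tauto | exact (IH y z Hf Hs)].
Qed.

Lemma reduced_word_cases u :
  reduced_word u -> alt_word u \/ exists a, u = [a] /\ C a /\ a <> one.
Proof.
  intros [Hf Hs]; destruct u as [|x [|y m]].
  - now left.
  - apply Forall_inv in Hf.
    destruct (classic (C x)); [right; exists x; split; [|split]; auto; apply Hf|].
    left; split; [|exact I]; constructor; [factor_tauto | constructor].
  - left; split; [exact (separated_letters_syllables Hf Hs) | exact Hs].
Qed.

Lemma alt_word_eval_neq_C u a : alt_word u -> C a -> a <> one -> eval u <> a.
Proof.
  intros Hu Ha Hna E.
  assert (Hia : C (inv a)).
  { apply C_AB in Ha; apply C_AB; now rewrite (subgroup_inv A_sub), (subgroup_inv B_sub). }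
  assert (Hlen : length (@nil G) = length u).
  { apply (alt_word_length_eq [] u (inv a)); [easy | exact Hu | exact Hia |].
    simpl; now rewrite gmul1l, E, gmulVl. }
  destruct u; [|discriminate]. now apply Hna.
Qed.

Lemma reduced_word_length_eq u v :
  reduced_word u -> reduced_word v -> eval u = eval v -> length u = length v.
Proof.
  intros Hu Hv E.
  destruct (reduced_word_cases u Hu) as [Hau | [a [-> [Ha Hna]]]],
           (reduced_word_cases v Hv) as [Hav | [b [-> [Hb Hnb]]]]; try reflexivity.
  - apply (alt_word_length_eq u v one Hau Hav C_one).
    now rewrite gmul1l, <- E, eval_inv_wordK.
  - exfalso; apply (alt_word_eval_neq_C u b Hau Hb Hnb); simpl in E; now rewrite gmul1r in E.
  - exfalso; apply (alt_word_eval_neq_C v a Hav Ha Hna); simpl in E; now rewrite gmul1r in E.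
Qed.

Lemma letter_word_exists u :
  Forall (fun x => A x \/ B x) u -> exists v, Forall letter v /\ eval v = eval u.
Proof.
  induction u as [|x u IH]; intros Hu; [now exists []|].
  apply Forall_cons_iff in Hu as [Hx Hu]; destruct (IH Hu) as [v [Hv Ev]].
  destruct (classic (x = one)) as [-> | Hx1].
  - exists v; split; [exact Hv|]; simpl; now rewrite gmul1l.
  - exists (x :: v); split; [now constructor | simpl; now rewrite Ev].
Qed.

Lemma merge_letters x y : letter x -> letter y -> same_factor x y ->
  exists z, Forall letter z /\ length z <= 1 /\ eval z = x ** y.
Proof.
  intros Hx Hy Hxy.
  destruct (classic (x ** y = one)) as [Hxy1 | Hxy1].
  - exists []; split; [constructor | split; [simpl; lia | now rewrite Hxy1]].
  - exists [x ** y]; split; [constructor; [|constructor] | split; [simpl; lia | apply gmul1r]].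
    split; [|exact Hxy1].
    destruct A_sub as [_ [HmA _]], B_sub as [_ [HmB _]].
    destruct Hxy as [[] | []]; auto.
Qed.

(* [P] is any count that merging an adjacent pair lowers by at most one, such as [occ w]. *)
Lemma reduce_word (P : nat -> list G -> Prop) :
  (forall k l x y m z, P k (l ++ x :: y :: m) -> same_factor x y -> P (pred k) (l ++ z ++ m)) ->
  forall v k, Forall letter v -> P k v ->
  exists u k', reduced_word u /\ eval u = eval v /\ length u <= length v /\
    P k' u /\ length u + k <= length v + k'.
Proof.
  intros P_merge v k.
  remember (length v) as n eqn:Hn; revert v k Hn.
  induction n as [n IH] using lt_wf_ind; intros v k -> Hv Hk.
  destruct (classic (exists l x y m, v = l ++ x :: y :: m /\ same_factor x y))
    as [[l [x [y [m [-> Hxy]]]]] | Hno].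
  - apply Forall_app in Hv as [Hl Hv]; apply Forall_cons_iff in Hv as [Hx Hv];
      apply Forall_cons_iff in Hv as [Hy Hm].
    destruct (merge_letters x y Hx Hy Hxy) as [z [Hz [Hzlen Ez]]].
    destruct (IH (length (l ++ z ++ m))) with (v := l ++ z ++ m) (k := pred k)
      as [u [k' [Hu [Eu [Hlen [Hk' Hcount]]]]]]; [| reflexivity | | |].
    + rewrite !length_app; simpl; lia.
    + apply Forall_app; split; [exact Hl | apply Forall_app; now split].
    + exact (P_merge k l x y m z Hk Hxy).
    + exists u, k'; split; [exact Hu|]; split; [|split; [|split; [exact Hk'|]]].
      * rewrite Eu, !eval_app, Ez; simpl; now rewrite <- gmulA.
      * rewrite !length_app in *; simpl in *; lia.
      * rewrite !length_app in *; simpl in *; lia.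
  - exists v, k; split; [split; [exact Hv|] | repeat split; auto].
    apply separated_of_no_pair; intros l x y m E Hxy.
    apply Hno; now exists l, x, y, m.
Qed.

Lemma reduced_word_geodesic u : reduced_word u -> geodesic letter u.
Proof.
  intros Hu; split; [exact (proj1 Hu)|]; intros v Hv Ev.
  destruct (reduce_word (fun _ _ => True) ltac:(easy) v 0 Hv I) as [u' [k' [Hu' [Eu' [Hlen _]]]]].
  rewrite (reduced_word_length_eq u u' Hu Hu'); [exact Hlen | congruence].
Qed.

Section Merging.
Variable w : list G.
Hypothesis w_ne : w <> [].
Hypothesis w_letters : Forall letter w.
Hypothesis ww_separated : separated (w ++ w).

Lemma w_inner_pair t a b s : w = t ++ a :: b :: s -> ~ same_factor a b.
Proof.
  intro E; apply (separated_pair ww_separated t a b (s ++ w)).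
  rewrite E at 1; now rewrite <- app_assoc.
Qed.

Lemma w_wrap_pair t a b s : w = t ++ [a] -> w = b :: s -> ~ same_factor a b.
Proof.
  intros E1 E2; apply (separated_pair ww_separated t a b s).
  rewrite E1 at 1; rewrite E2; now rewrite <- app_assoc.
Qed.

Lemma w_cons : exists a s, w = a :: s.
Proof. destruct w as [|a s]; [easy | eauto]. Qed.

Lemma occ_start_no_pair u x y m : w ++ u = x :: y :: m -> ~ same_factor x y.
Proof.
  intro E; destruct w_cons as [a [[|b s] Ew]]; rewrite Ew in E.
  - injection E as <- _.
    assert (Ha : letter a) by (rewrite Ew in w_letters; exact (Forall_inv w_letters)).
    exfalso; apply (w_wrap_pair [] a a [] Ew Ew); factor_tauto.
  - injection E as <- <- _; exact (w_inner_pair [] a b s Ew).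
Qed.

(* Since [w ++ w] is separated, an occurrence of [w] cannot contain the pair
   [x, y], nor can two occurrences meet it, one ending at [x] and one starting
   at [y]; so at most one occurrence is destroyed. *)
Lemma occ_merge k l x y m z :
  occ w k (l ++ x :: y :: m) -> same_factor x y -> occ w (pred k) (l ++ z ++ m).
Proof.
  intros Hk Hxy; remember (l ++ x :: y :: m) as v eqn:Ev; revert l m Ev.
  induction Hk as [v | k p u Hu IH]; intros l m Ev; [constructor|]; simpl.
  apply app_eq_app in Ev as [t [[-> Et] | [-> Et]]].
  - destruct t as [|x' [|y' t]]; simpl in Et.
    + exfalso; exact (occ_start_no_pair u x y m (eq_sym Et) Hxy).
    + injection Et as -> Et.
      destruct w_cons as [a [s Ew]]; rewrite Ew in Et; injection Et as -> ->.
      rewrite !app_assoc; now apply occ_app_l.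
    + injection Et as -> -> ->.
      apply occ_pred; replace (l ++ z ++ t ++ w ++ u) with ((l ++ z ++ t) ++ w ++ u)
        by now rewrite <- !app_assoc.
      now constructor.
  - apply app_eq_app in Et as [t2 [[Ew Eu] | [-> ->]]].
    + destruct t2 as [|x' [|y' t3]]; simpl in Eu.
      * rewrite app_nil_r in Ew; subst u t.
        apply occ_le with (k := S (pred k)); [|lia].
        rewrite <- app_assoc; constructor; exact (IH [] m eq_refl).
      * injection Eu as <- <-.
        assert (Hm : occ w k m).
        { apply (occ_cons_inv w_ne Hu); intros s Es; exact (w_wrap_pair t x y s Ew Es Hxy). }
        rewrite !app_assoc; now apply occ_app_l.
      * injection Eu as <- <- _; exfalso; exact (w_inner_pair t x y t3 Ew Hxy).
    + apply occ_le with (k := S (pred k)); [|lia].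
      rewrite <- !app_assoc; constructor; exact (IH t2 m eq_refl).
Qed.

Lemma optimal_reduced_word g v0 : Forall letter v0 -> eval v0 = g ->
  exists u k, reduced_word u /\ eval u = g /\ occ w k u /\
    forall v kv, Forall letter v -> eval v = g -> occ w kv v -> length u - k <= length v - kv.
Proof.
  intros Hv0 Ev0.
  destruct (nat_min_exists
              (fun n => exists v k, Forall letter v /\ eval v = g /\ occ w k v /\ n = length v - k))
    as [n [[v [k [Hv [Ev [Hk ->]]]]] Hmin]].
  { exists (length v0), v0, 0; repeat split; auto; [constructor | lia]. }
  destruct (reduce_word (occ w) occ_merge v k Hv Hk) as [u [k' [Hu [Eu [_ [Hk' Hcount]]]]]].
  exists u, k'; split; [exact Hu|]; split; [now rewrite Eu|]; split; [exact Hk'|].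
  intros v' kv Hv' Ev' Hkv.
  assert (length v - k <= length v' - kv) by (apply Hmin; exists v', kv; auto).
  pose proof (occ_length w_ne Hk); pose proof (occ_length w_ne Hk'); lia.
Qed.

End Merging.
End ReducedForm.

Theorem lemma3p2 (G : Group) (A B C : G -> Prop)
  (hamalg : is_amalgam A B C)
  (hA : exists a, A a /\ ~ C a)   (* |A/C| >= 2 *)
  (hB : exists b, B b /\ ~ C b)   (* |B/C| >= 2 *)
  (w : list G)
  (hw_word : is_word (fun x => (A x \/ B x) /\ x <> @gone G) w)
  (hw_ne : w <> [])
  (hw2 : reduced A B C (w ++ w)) :
  let S := fun x : G => (A x \/ B x) /\ x <> @gone G in
  forall g : G, exists u : list G,
    geodesic S u /\ eval u = g /\
    exists ku, occ_count w u ku /\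
      forall v kv, is_word S v -> eval v = g -> occ_count w v kv ->
        length u - ku <= length v - kv.
Proof.
  intros S g.
  destruct hamalg as [A_sub [B_sub [C_AB [generated alternating_neq1]]]].
  assert (ww_separated : separated A B (w ++ w)).
  { destruct hw2 as [Hlen | Halt]; [|exact (alternating_separated A B C C_AB _ Halt)].
    destruct w; [easy | rewrite length_app in Hlen; simpl in Hlen; lia]. }
  destruct (generated g) as [u0 [Hu0 <-]].
  destruct (letter_word_exists A B u0 Hu0) as [v0 [Hv0 Ev0]].
  destruct (optimal_reduced_word A B C A_sub B_sub C_AB w hw_ne hw_word ww_separated _ v0 Hv0 Ev0)
    as [u [k [Hu [Eu [Hk Hopt]]]]].
  destruct (occ_count_exists hw_ne u) as [ku [Hku Hmax]].
  exists u; split; [exact (reduced_word_geodesic A B C A_sub B_sub C_AB alternating_neq1 u Hu)|].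
  split; [exact Eu|]; exists ku; split; [now split|].
  intros v kv Hv Ev [Hkv _].
  specialize (Hopt v kv Hv Ev Hkv); specialize (Hmax k Hk); lia.
Qed.
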